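(* Let $(V_4,g)$ be a space-time whose Ricci tensor $R$ is of non-null electromagnetic type and whose Weyl tensor $W$ is of Petrov–Bel type D. Then $R$ and $W$ have aligned (i.e. coinciding) principal planes if and only if $$a\neq0,\qquad R^{\mu}{}_{(\lambda}\mathcal P_{\nu)\mu\gamma\delta}=0,\qquad \mathcal P\equiv\mathcal W+\frac ba\mathcal G,$$ where $\mathcal W=\frac12(W-i*W)$ is the self-dual Weyl tensor, $a=\mathrm{Tr}\mathcal W^2$, $b=\mathrm{Tr}\mathcal W^3$.
   Context: Signature $(-,+,+,+)$; curvature conventions as in Kramer et al. Round brackets on indices denote symmetrization. For double 2-forms, $(P\circ Q)^{\alpha\beta}{}_{\rho\sigma}=\frac12P^{\alpha\beta}{}_{\mu\nu}Q^{\mu\nu}{}_{\rho\sigma}$, $P^2=P\circ P$, $\mathrm{Tr}P=\frac12P^{\alpha\beta}{}_{\alpha\beta}$; $*W=\eta\circ W$ with $\eta$ the volume element; $G=\frac12g\wedge g$ with $(A\wedge B)_{\alpha\beta\mu\nu}=A_{\alpha\mu}B_{\beta\nu}+A_{\beta\nu}B_{\alpha\mu}-A_{\alpha\nu}B_{\beta\mu}-A_{\beta\mu}B_{\alpha\nu}$; $\mathcal G=\frac12(G-i\eta)$. $R$ is of non-null electromagnetic type if $R=-\kappa\Pi$ where $\kappa>0$ and $\Pi=v-h$, with $v=U^2$, $h=-( *U)^2$ for a simple unit 2-form $U$ (equivalently $\mathrm{tr}R=0$, $4R^2=(\mathrm{tr}R^2)g\neq0$, $R(x,x)>0$ for time-like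 $x$); its principal planes are the time-like plane $V$ with volume element $U$ and its orthogonal complement $H$. $W$ is of Petrov–Bel type D if $\mathcal W=3\rho\,\mathcal U\otimes\mathcal U+\rho\mathcal G$ with $\rho=-b/a$ and $\mathcal U=\frac1{\sqrt2}(U'-i*U')$ a normalized self-dual bivector ($U'$ a simple unit 2-form); its principal planes are the time-like plane with volume element $U'$ and its orthogonal complement. *)

(* Pointwise (tangent-space) formalization. *)
From HB Require Import structures.
From mathcomp Require Import all_boot all_order all_algebra.
From mathcomp Require Import complex.
Set Implicit Arguments. Unset Strict Implicit. Unset Printing Implicit Defensive.
Import Order.TTheory GRing.Theory Num.Theory.
Local Open Scope ring_scope.

(* Tensors at a point, components in a coordinate basis, ALL INDICES DOWN. *)
Definition tensor2 (F : Type) := 'I_4 -> 'I_4 -> F.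
Definition tensor4 (F : Type) := 'I_4 -> 'I_4 -> 'I_4 -> 'I_4 -> F.

Section Generic.
Variable F : fieldType.
Variable gi : 'I_4 -> 'I_4 -> F.  (* inverse metric g^{ab} *)

Definition dcomp (P Q : tensor4 F) : tensor4 F := fun a b r s =>
  2^-1 * \sum_(m < 4) \sum_(n < 4) \sum_(m' < 4) \sum_(n' < 4)
     P a b m n * gi m m' * gi n n' * Q m' n' r s.

Definition dtr (P : tensor4 F) : F :=
  2^-1 * \sum_(a < 4) \sum_(b < 4) \sum_(a' < 4) \sum_(b' < 4)
     gi a a' * gi b b' * P a' b' a b.

Definition kwedge (A B : tensor2 F) : tensor4 F := fun a b m n =>
  A a m * B b n + A b n * B a m - A a n * B b m - A b m * B a n.

Definition otimes2 (U V : tensor2 F) : tensor4 F := fun a b c d => U a b * V c d.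

Definition fsq (U : tensor2 F) : tensor2 F := fun a b =>
  \sum_(m < 4) \sum_(n < 4) U a m * gi m n * U n b.

Definition ip2 (U V : tensor2 F) : F :=
  \sum_(a < 4) \sum_(b < 4) \sum_(a' < 4) \sum_(b' < 4)
     U a b * gi a a' * gi b b' * V a' b'.

Definition hodge2 (eta : tensor4 F) (U : tensor2 F) : tensor2 F := fun a b =>
  2^-1 * \sum_(m < 4) \sum_(n < 4) \sum_(m' < 4) \sum_(n' < 4)
     eta a b m n * gi m m' * gi n n' * U m' n'.

(* Levi-Civita symbol, eps_{0123} = 1 *)
Definition eps (a b c d : 'I_4) : F :=
  \det (\matrix_(r < 4, k < 4) ((nth ord0 [:: a; b; c; d] r == k)%:R : F)).
End Generic.

Section Phys.
Variable R : rcfType.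
Local Notation C := R[i].
Local Open Scope complex_scope.

Definition ginv (g : 'M[R]_4) : 'I_4 -> 'I_4 -> R := fun a b => invmx g a b.
Definition gten (g : 'M[R]_4) : tensor2 R := fun a b => g a b.

Definition lorentzian (g : 'M[R]_4) : Prop :=
  g^T = g /\ exists E : 'M[R]_4,
    E^T *m g *m E = diag_mx (\row_(i < 4) (if i == ord0 then -1 else 1)).

Definition vol (g : 'M[R]_4) : tensor4 R := fun a b c d =>
  Num.sqrt (- \det g) * eps R a b c d.

Definition liftT2 (T : tensor2 R) : tensor2 C := fun a b => (T a b)%:C.
Definition liftT4 (T : tensor4 R) : tensor4 C := fun a b c d => (T a b c d)%:C.
Definition ginvC (g : 'M[R]_4) : 'I_4 -> 'I_4 -> C := fun a b => (ginv g a b)%:C.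

Definition Gten (g : 'M[R]_4) : tensor4 R := fun a b m n =>
  2^-1 * kwedge (gten g) (gten g) a b m n.
Definition calG (g : 'M[R]_4) : tensor4 C := fun a b m n =>
  2^-1 * ((Gten g a b m n)%:C - 'i * (vol g a b m n)%:C).

Definition dstar (g : 'M[R]_4) (W : tensor4 R) : tensor4 R :=
  dcomp (ginv g) (vol g) W.

Definition selfdual (g : 'M[R]_4) (W : tensor4 R) : tensor4 C := fun a b c d =>
  2^-1 * ((W a b c d)%:C - 'i * (dstar g W a b c d)%:C).

Definition inv_a (g : 'M[R]_4) (W : tensor4 R) : C :=
  let cW := selfdual g W in dtr (ginvC g) (dcomp (ginvC g) cW cW).
Definition inv_b (g : 'M[R]_4) (W : tensor4 R) : C :=
  let cW := selfdual g W in
  dtr (ginvC g) (dcomp (ginvC g) cW (dcomp (ginvC g) cW cW)).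

Definition simple2 (U : tensor2 R) : Prop :=
  exists u v : 'I_4 -> R, forall a b, U a b = u a * v b - u b * v a.

(* simple unit 2-form of a time-like plane: U_{ab} U^{ab} = -2 *)
Definition timelike_unit2 (g : 'M[R]_4) (U : tensor2 R) : Prop :=
  simple2 U /\ ip2 (ginv g) U U = -2.

(* Ric = - kappa Pi, Pi = v - h, v = U^2, h = -( *U)^2 *)
Definition em_data (g : 'M[R]_4) (Ric : tensor2 R) (kappa : R) (U : tensor2 R) :=
  0 < kappa /\ timelike_unit2 g U /\
  forall a b, Ric a b =
    - kappa * (fsq (ginv g) U a b
               - (- fsq (ginv g) (hodge2 (ginv g) (vol g) U) a b)).

Definition nonnull_em (g : 'M[R]_4) (Ric : tensor2 R) : Prop :=
  exists kappa U, em_data g Ric kappa U.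

Definition typeD_data (g : 'M[R]_4) (W : tensor4 R) (U' : tensor2 R) : Prop :=
  let a := inv_a g W in
  let b := inv_b g W in
  let rho := - b / a in
  let cU : tensor2 C := fun m n =>
    ((Num.sqrt 2)%:C)^-1 *
      ((U' m n)%:C - 'i * (hodge2 (ginv g) (vol g) U' m n)%:C) in
  a != 0 /\ timelike_unit2 g U' /\
  forall p q r s, selfdual g W p q r s =
     3%:R * rho * otimes2 cU cU p q r s + rho * calG g p q r s.

Definition typeD (g : 'M[R]_4) (W : tensor4 R) : Prop :=
  exists U', typeD_data g W U'.

(* the 2-plane with (simple) volume element U : vectors x with x_flat /\ U = 0 *)
Definition plane_of (g : 'M[R]_4) (U : tensor2 R) (x : 'I_4 -> R) : Prop :=
  let xl := fun a => \sum_(m < 4) g a m * x m in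
  forall a b c, xl a * U b c + xl b * U c a + xl c * U a b = 0.

Definition orth (g : 'M[R]_4) (P : ('I_4 -> R) -> Prop) (x : 'I_4 -> R) : Prop :=
  forall y, P y -> \sum_(a < 4) \sum_(b < 4) g a b * x a * y b = 0.

(* principal planes of Ric (V, H) and of W coincide *)
Definition aligned (g : 'M[R]_4) (Ric : tensor2 R) (W : tensor4 R) : Prop :=
  exists kappa U U', em_data g Ric kappa U /\ typeD_data g W U' /\
    (forall x, plane_of g U x <-> plane_of g U' x) /\
    (forall x, orth g (plane_of g U) x <-> orth g (plane_of g U') x).

Definition weyl_alg (g : 'M[R]_4) (W : tensor4 R) : Prop :=
  (forall a b c d, W a b c d = - W b a c d) /\
  (forall a b c d, W a b c d = - W a b d c) /\
  (forall a b c d, W a b c d = W c d a b) /\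
  (forall a b c d, W a b c d + W a c d b + W a d b c = 0) /\
  (forall b d, \sum_(a < 4) \sum_(c < 4) ginv g a c * W a b c d = 0).

Definition sym2 (T : tensor2 R) : Prop := forall a b, T a b = T b a.

Definition calP (g : 'M[R]_4) (W : tensor4 R) : tensor4 C := fun p q r s =>
  selfdual g W p q r s + inv_b g W / inv_a g W * calG g p q r s.

Definition RP_sym (g : 'M[R]_4) (Ric : tensor2 R) (W : tensor4 R) (l n c d : 'I_4) : C :=
  2^-1 * \sum_(m < 4) \sum_(k < 4)
     (ginvC g m k * (Ric k l)%:C * calP g W n m c d
      + ginvC g m k * (Ric k n)%:C * calP g W l m c d).

End Phys.

(* In an orthonormal frame of g every contraction becomes a
   Minkowski-space expression, and there a direct computation shows that for a
   simple unit time-like 2-form U, with M = g^-1 U and N = g^-1 *U,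
     M N = N M = 0,   M^2 - N^2 = 1,   M (g^-1 X) M = (tr(g^-1 X M) / 2) M
   for every 2-form X, and similarly for N.  The Ricci operator
   g^-1 Ric = -kappa (M^2 + N^2) therefore commutes with M and N.  For type D,
   P = 3 rho calU (x) calU, so R^m_(l P_n)mcd is a nonzero multiple of calU_cd
   times [U', Ric] - i [*U', Ric], and the condition says exactly that the Weyl
   principal 2-form U' commutes with Ric, i.e. with M^2.  The identities above
   then force g^-1 U' = mu M, and simple 2-forms span the same plane iff they
   are proportional. *)

From HB Require Import structures.
From mathcomp Require Import all_boot all_order all_algebra.
From mathcomp Require Import complex.
From mathcomp Require Import perm ring lra.
Set Implicit Arguments. Unset Strict Implicit. Unset Printing Implicit Defensive.
Import Order.TTheory GRing.Theory Num.Theory.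
Local Open Scope ring_scope.

Definition i0 : 'I_4 := @Ordinal 4 0 isT.
Definition i1 : 'I_4 := @Ordinal 4 1 isT.
Definition i2 : 'I_4 := @Ordinal 4 2 isT.
Definition i3 : 'I_4 := @Ordinal 4 3 isT.

Lemma ord4P (P : 'I_4 -> Prop) : P i0 -> P i1 -> P i2 -> P i3 -> forall i, P i.
Proof.
move=> P0 P1 P2 P3 [[|[|[|[|k]]]] lt_k4] //.
- by rewrite (_ : Ordinal lt_k4 = i0) //; apply: val_inj.
- by rewrite (_ : Ordinal lt_k4 = i1) //; apply: val_inj.
- by rewrite (_ : Ordinal lt_k4 = i2) //; apply: val_inj.
- by rewrite (_ : Ordinal lt_k4 = i3) //; apply: val_inj.
Qed.

Lemma sum_ord4 (V : nmodType) (F : 'I_4 -> V) :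
  \sum_(i < 4) F i = F i0 + F i1 + F i2 + F i3.
Proof.
by rewrite !big_ord_recr big_ord0 /= add0r; congr (_ + _ + _ + _); congr F; apply: val_inj.
Qed.

Lemma prod_ord4 (K : comNzRingType) (F : 'I_4 -> K) :
  \prod_(i < 4) F i = F i0 * F i1 * F i2 * F i3.
Proof.
by rewrite !big_ord_recr big_ord0 /= mul1r; congr (_ * _ * _ * _); congr F; apply: val_inj.
Qed.

Section LeviCivita.
Variable F : fieldType.

Definition eps_mx (a b c d : 'I_4) : 'M[F]_4 :=
  \matrix_(r < 4, k < 4) ((nth ord0 [:: a; b; c; d] r == k)%:R : F).

Lemma eps_det a b c d : eps F a b c d = \det (eps_mx a b c d).
Proof. by []. Qed.

Lemma det_xrow_eps_mx (r s : 'I_4) a b c d (A : 'M[F]_4) :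
  r != s -> A = xrow r s (eps_mx a b c d) -> \det A = - eps F a b c d.
Proof. by move=> rs ->; rewrite xrowE det_mulmx det_perm odd_tperm rs expr1 mulN1r. Qed.

Lemma eps_swap01 a b c d : eps F b a c d = - eps F a b c d.
Proof.
apply: (@det_xrow_eps_mx i0 i1) => //; apply/matrixP => r k; rewrite !mxE.
by elim/ord4P: r; rewrite ?tpermL ?tpermR ?tpermD.
Qed.

Lemma eps_swap12 a b c d : eps F a c b d = - eps F a b c d.
Proof.
apply: (@det_xrow_eps_mx i1 i2) => //; apply/matrixP => r k; rewrite !mxE.
by elim/ord4P: r; rewrite ?tpermL ?tpermR ?tpermD.
Qed.

Lemma eps_swap23 a b c d : eps F a b d c = - eps F a b c d.
Proof.
apply: (@det_xrow_eps_mx i2 i3) => //; apply/matrixP => r k; rewrite !mxE.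
by elim/ord4P: r; rewrite ?tpermL ?tpermR ?tpermD.
Qed.

Lemma eps_not_uniq a b c d : ~~ uniq [:: a; b; c; d] -> eps F a b c d = 0.
Proof.
move=> not_uniq.
have eq_rows (r s : 'I_4) : r != s ->
    (forall k, eps_mx a b c d r k = eps_mx a b c d s k) -> eps F a b c d = 0.
  by move=> rs e; rewrite eps_det; apply: (determinant_alternate rs) => k; apply: e.
case: (eqVneq a b) => [e|ab]; first by apply: (eq_rows i0 i1) => // k; rewrite !mxE /= e.
case: (eqVneq a c) => [e|ac]; first by apply: (eq_rows i0 i2) => // k; rewrite !mxE /= e.
case: (eqVneq a d) => [e|ad]; first by apply: (eq_rows i0 i3) => // k; rewrite !mxE /= e.
case: (eqVneq b c) => [e|bc]; first by apply: (eq_rows i1 i2) => // k; rewrite !mxE /= e.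
case: (eqVneq b d) => [e|bd]; first by apply: (eq_rows i1 i3) => // k; rewrite !mxE /= e.
case: (eqVneq c d) => [e|cd]; first by apply: (eq_rows i2 i3) => // k; rewrite !mxE /= e.
by move: not_uniq; rewrite /= !inE !negb_or ab ac ad bc bd cd.
Qed.

Lemma eps_0123 : eps F i0 i1 i2 i3 = 1.
Proof.
rewrite eps_det (_ : eps_mx _ _ _ _ = 1%:M) ?det1 //.
by apply/matrixP => r k; rewrite !mxE; elim/ord4P: r.
Qed.

(* 0 on repeated indices, else 1 or 2 for an even or odd number of inversions,
   so that [eps_table] reduces by computation on concrete indices. *)
Definition eps_code (a b c d : nat) : nat :=
  if [&& a != b, a != c, a != d, b != c, b != d & c != d]%N then
    (if odd ((b < a) + (c < a) + (d < a) + (c < b) + (d < b) + (d < c))%N then 2 else 1)%N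
  else 0%N.

Definition eps_table (a b c d : 'I_4) : F :=
  match eps_code a b c d with 0%N => 0 | 1%N => 1 | _ => -1 end.

Ltac eps_sort := repeat first [
  rewrite (@eps_swap01 i0 i1) | rewrite (@eps_swap01 i0 i2) | rewrite (@eps_swap01 i0 i3)
| rewrite (@eps_swap01 i1 i2) | rewrite (@eps_swap01 i1 i3) | rewrite (@eps_swap01 i2 i3)
| rewrite (@eps_swap12 _ i0 i1) | rewrite (@eps_swap12 _ i0 i2) | rewrite (@eps_swap12 _ i0 i3)
| rewrite (@eps_swap12 _ i1 i2) | rewrite (@eps_swap12 _ i1 i3) | rewrite (@eps_swap12 _ i2 i3)
| rewrite (@eps_swap23 _ _ i0 i1) | rewrite (@eps_swap23 _ _ i0 i2)
| rewrite (@eps_swap23 _ _ i0 i3) | rewrite (@eps_swap23 _ _ i1 i2)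
| rewrite (@eps_swap23 _ _ i1 i3) | rewrite (@eps_swap23 _ _ i2 i3) ].

Lemma epsE a b c d : eps F a b c d = eps_table a b c d.
Proof.
elim/ord4P: a; elim/ord4P: b; elim/ord4P: c; elim/ord4P: d; rewrite /eps_table /=;
  first [ by rewrite eps_not_uniq | by eps_sort; rewrite eps_0123 ?opprK ].
Qed.

Lemma sum_delta_ord4 (G : 'I_4 -> F) j : \sum_(i < 4) (i == j)%:R * G i = G j.
Proof. by rewrite (bigD1 j) //= eqxx mul1r big1 ?addr0 // => i /negbTE ->; rewrite mul0r. Qed.

Lemma det4_eps (B : 'M[F]_4) : \det B =
  \sum_a \sum_b \sum_c \sum_d eps F a b c d * B i0 a * B i1 b * B i2 c * B i3 d.
Proof.
symmetry.
under eq_bigr => a _ do under eq_bigr => b _ do under eq_bigr => c _ do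
  under eq_bigr => d _ do rewrite eps_det /determinant !big_distrl.
under eq_bigr => a _ do under eq_bigr => b _ do under eq_bigr => c _ do rewrite exchange_big.
under eq_bigr => a _ do under eq_bigr => b _ do rewrite exchange_big.
under eq_bigr => a _ do rewrite exchange_big.
rewrite exchange_big /=; apply: eq_bigr => s _.
set sg := (-1) ^+ s.
transitivity (\sum_(a < 4) (a == s i0)%:R * \sum_(b < 4) (b == s i1)%:R *
   \sum_(c < 4) (c == s i2)%:R * \sum_(d < 4) (d == s i3)%:R *
   (sg * B i0 a * B i1 b * B i2 c * B i3 d)).
  apply: eq_bigr => a _; rewrite big_distrr /=; apply: eq_bigr => b _.
  rewrite !big_distrr /=; apply: eq_bigr => c _.
  rewrite !big_distrr /=; apply: eq_bigr => d _.
  rewrite prod_ord4 !mxE /=.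
  move: ((a == s i0)%:R) ((b == s i1)%:R) ((c == s i2)%:R) ((d == s i3)%:R) => x y z w.
  ring.
by rewrite !sum_delta_ord4 prod_ord4; ring.
Qed.

Lemma sum_eps_mul (A : 'M[F]_4) i j k l :
  \sum_a \sum_b \sum_m \sum_n eps F a b m n * A a i * A b j * A m k * A n l
  = \det A * eps F i j k l.
Proof.
have entry r x : (eps_mx i j k l *m A^T) r x = A x (nth ord0 [:: i; j; k; l] r).
  rewrite !mxE; under eq_bigr => y _ do rewrite !mxE eq_sym.
  by rewrite sum_delta_ord4.
rewrite eps_det -(det_tr A) mulrC -det_mulmx det4_eps.
by apply: eq_bigr => a _; apply: eq_bigr => b _; apply: eq_bigr => m _;
  apply: eq_bigr => n _; rewrite !entry.
Qed.

Definition eps_contract (Z : 'M[F]_4) : 'M[F]_4 :=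
  \matrix_(a, b) \sum_m \sum_n eps F a b m n * Z m n.

Lemma eps_contract_congr (A Z : 'M[F]_4) :
  A^T *m eps_contract (A *m Z *m A^T) *m A = \det A *: eps_contract Z.
Proof.
apply/matrixP => i j; rewrite !mxE.
transitivity (\sum_l \sum_k (\sum_a \sum_b \sum_m \sum_n
   eps F a b m n * A a i * A b j * A m k * A n l) * Z k l); last first.
  under eq_bigr => l _ do under eq_bigr => k _ do rewrite sum_eps_mul.
  rewrite exchange_big big_distrr /=; apply: eq_bigr => k _.
  rewrite big_distrr /=; apply: eq_bigr => l _; ring.
transitivity (\sum_b \sum_a \sum_m \sum_n \sum_l \sum_k
   (eps F a b m n * A a i * A b j * A m k * A n l) * Z k l).
  apply: eq_bigr => b _; rewrite mxE mulr_suml; apply: eq_bigr => a _.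
  rewrite !mxE mulr_sumr mulr_suml; apply: eq_bigr => m _.
  rewrite mulr_sumr mulr_suml; apply: eq_bigr => n _; move: (eps F a b m n) => e.
  rewrite !mxE !(mulr_suml, mulr_sumr); apply: eq_bigr => l _.
  rewrite !mxE !(mulr_suml, mulr_sumr); apply: eq_bigr => k _.
  ring.
under eq_bigr => a _ do under eq_bigr => b _ do under eq_bigr => m _ do rewrite exchange_big.
under eq_bigr => a _ do under eq_bigr => b _ do under eq_bigr => m _ do
  under eq_bigr => l _ do rewrite exchange_big.
under eq_bigr => a _ do under eq_bigr => b _ do rewrite exchange_big.
under eq_bigr => a _ do under eq_bigr => b _ do under eq_bigr => l _ do rewrite exchange_big.
under eq_bigr => a _ do rewrite exchange_big.
under eq_bigr => a _ do under eq_bigr => l _ do rewrite exchange_big.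
rewrite exchange_big.
under eq_bigr => l _ do rewrite exchange_big.
apply: eq_bigr => l _; apply: eq_bigr => k _; rewrite exchange_big big_distrl /=.
apply: eq_bigr => a _; rewrite big_distrl /=; apply: eq_bigr => b _.
rewrite big_distrl /=; apply: eq_bigr => m _; rewrite big_distrl /=.
by apply: eq_bigr => n _.
Qed.
End LeviCivita.

Section Minkowski.
Variable R : numFieldType.

Definition minkowski : 'M[R]_4 := diag_mx (\row_(i < 4) (if i == ord0 then -1 else 1)).

Definition wedge_mx (u v : 'I_4 -> R) : 'M[R]_4 := \matrix_(i, j) (u i * v j - u j * v i).

(* The Hodge dual of a 2-form in an orthonormal frame, tabulated so that its
   entries compute on concrete indices. *)
Definition mhodge_entry (Y : 'M[R]_4) (i j : 'I_4) : R :=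
  match val i, val j with
  | 0, 1 => Y i2 i3 | 1, 0 => - Y i2 i3
  | 0, 2 => - Y i1 i3 | 2, 0 => Y i1 i3
  | 0, 3 => Y i1 i2 | 3, 0 => - Y i1 i2
  | 1, 2 => - Y i0 i3 | 2, 1 => Y i0 i3
  | 1, 3 => Y i0 i2 | 3, 1 => - Y i0 i2
  | 2, 3 => - Y i0 i1 | 3, 2 => Y i0 i1
  | _, _ => 0 end.

Definition mhodge (Y : 'M[R]_4) : 'M[R]_4 := \matrix_(i, j) mhodge_entry Y i j.

Local Notation eta := minkowski.

Lemma det_minkowski : \det eta = -1.
Proof. by rewrite det_diag prod_ord4 !mxE /=; ring. Qed.

Lemma minkowski_sqr : eta *m eta = 1%:M.
Proof.
apply/matrixP => i j; rewrite mul_diag_mx !mxE.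
by elim/ord4P: i; rewrite /= ?mul1r // mulN1r -mulNrn opprK.
Qed.

Lemma tr_minkowski : eta^T = eta.
Proof. exact: tr_diag_mx. Qed.

Lemma antisym_diag (X : 'M[R]_4) : X^T = - X -> forall a, X a a = 0.
Proof.
move=> X_antisym a; have /eqP := congr1 (fun M : 'M_4 => M a a) X_antisym.
by rewrite !mxE -subr_eq0 opprK -mulr2n mulrn_eq0 => /eqP.
Qed.

Lemma antisym_entry (X : 'M[R]_4) : X^T = - X -> forall a b, X b a = - X a b.
Proof.
by move=> X_antisym a b; have := congr1 (fun M : 'M_4 => M a b) X_antisym; rewrite !mxE.
Qed.

Ltac expand_entries :=
  rewrite /mxtrace ?mul_mx_diag ?mul_diag_mx; repeat first [rewrite sum_ord4 | rewrite mxE].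

Lemma mhodge_eps (Y : 'M[R]_4) : Y^T = - Y ->
  mhodge Y = 2^-1 *: eps_contract (eta *m Y *m eta).
Proof.
move=> Y_antisym; have Y0 := antisym_diag Y_antisym; have YN := antisym_entry Y_antisym.
apply/matrixP => i j; rewrite !mxE; under eq_bigr => k _ do under eq_bigr => l _ do
  rewrite mul_diag_mx mul_mx_diag !mxE.
rewrite !sum_ord4 !epsE; elim/ord4P: i; elim/ord4P: j; rewrite /mhodge_entry /eps_table /=;
  rewrite ?Y0 ?(YN i0 i1) ?(YN i0 i2) ?(YN i0 i3) ?(YN i1 i2) ?(YN i1 i3) ?(YN i2 i3); by field.
Qed.

Variables u v : 'I_4 -> R.
Local Notation U := (wedge_mx u v).
Local Notation S := (mhodge (wedge_mx u v)).

Lemma wedge_hodge_orth : U *m eta *m S = 0.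
Proof.
apply/matrixP => i j; expand_entries;
elim/ord4P: i; elim/ord4P: j; rewrite /mhodge_entry /= ?mxE; ring.
Qed.

Lemma wedge_sqr_sub_hodge_sqr :
  U *m eta *m U - S *m eta *m S = (2^-1 * \tr (eta *m U *m eta *m U)) *: eta.
Proof.
apply/matrixP => i j; expand_entries;
elim/ord4P: i; elim/ord4P: j; rewrite /mhodge_entry /= ?mxE; by field.
Qed.

Lemma wedge_sandwich (X : 'M[R]_4) : X^T = - X ->
  U *m eta *m X *m eta *m U = (2^-1 * \tr (eta *m X *m eta *m U)) *: U.
Proof.
move=> X_antisym; have X0 := antisym_diag X_antisym; have XN := antisym_entry X_antisym.
apply/matrixP => i j; expand_entries;
elim/ord4P: i; elim/ord4P: j; rewrite /mhodge_entry /= ?mxE;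
  rewrite ?X0 ?(XN i0 i1) ?(XN i0 i2) ?(XN i0 i3) ?(XN i1 i2) ?(XN i1 i3) ?(XN i2 i3); by field.
Qed.

Lemma hodge_sandwich (X : 'M[R]_4) : X^T = - X ->
  S *m eta *m X *m eta *m S = (2^-1 * \tr (eta *m X *m eta *m S)) *: S.
Proof.
move=> X_antisym; have X0 := antisym_diag X_antisym; have XN := antisym_entry X_antisym.
apply/matrixP => i j; expand_entries;
elim/ord4P: i; elim/ord4P: j; rewrite /mhodge_entry /= ?mxE;
  rewrite ?X0 ?(XN i0 i1) ?(XN i0 i2) ?(XN i0 i3) ?(XN i1 i2) ?(XN i1 i3) ?(XN i2 i3); by field.
Qed.
End Minkowski.

Definition tensor_mx (R : Type) (T : tensor2 R) : 'M[R]_4 := \matrix_(a, b) T a b.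

Section Frame.
Variable R : rcfType.
Variables g E : 'M[R]_4.
Hypothesis frameE : E^T *m g *m E = minkowski R.
Local Notation eta := (minkowski R).
Local Notation G := (invmx g).

Lemma det_frame : \det E ^+ 2 * \det g = -1.
Proof. by rewrite -(det_minkowski R) -frameE !det_mulmx det_tr; ring. Qed.

Lemma det_metric_lt0 : \det g < 0.
Proof. by have := det_frame; have := sqr_ge0 (\det E); nra. Qed.

Lemma metric_unit : g \in unitmx.
Proof. by rewrite unitmxE unitfE ltr0_neq0 // det_metric_lt0. Qed.

Lemma frame_unit : E \in unitmx.
Proof. by rewrite unitmxE unitfE; apply/eqP => E0; have := det_frame; rewrite E0; lra. Qed.

Lemma invmx_frame : G = E *m eta *m E^T.
Proof.
have inv_right : E *m eta *m E^T *m g = 1%:M.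
  apply: (can_inj (mulmxK frame_unit)); rewrite mul1mx.
  by rewrite -!mulmxA [E^T *m _]mulmxA frameE minkowski_sqr mulmx1.
by rewrite -[RHS](mulmxK metric_unit) inv_right mul1mx.
Qed.

Lemma tr_invmx_metric : G^T = G.
Proof. by rewrite invmx_frame !trmx_mul trmxK tr_minkowski mulmxA. Qed.

Lemma frame_inj (A B : 'M[R]_4) : E^T *m A *m E = E^T *m B *m E -> A = B.
Proof.
have trE_unit : E^T \in unitmx by rewrite unitmx_tr frame_unit.
move=> /(can_inj (mulmxK frame_unit)) /(congr1 (mulmx (invmx E^T))).
by rewrite !mulKmx.
Qed.

Lemma frame_mulmx (A B : 'M[R]_4) :
  E^T *m (A *m G *m B) *m E = (E^T *m A *m E) *m eta *m (E^T *m B *m E).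
Proof. by rewrite invmx_frame !mulmxA. Qed.

Lemma mxtrace_frame (A B : 'M[R]_4) :
  \tr (G *m A *m G *m B) = \tr (eta *m (E^T *m A *m E) *m eta *m (E^T *m B *m E)).
Proof. by rewrite invmx_frame -!mulmxA mxtrace_mulC -!mulmxA mxtrace_mulC -!mulmxA. Qed.

Definition orientation : R := Num.sqrt (- \det g) * \det E.

Lemma orientation_sqr : orientation * orientation = 1.
Proof.
rewrite mulrACA -expr2 sqr_sqrtr; last by have := det_metric_lt0; lra.
by have := det_frame; lra.
Qed.

Lemma hodge2_eps_contract (U : tensor2 R) :
  tensor_mx (hodge2 (ginv g) (vol g) U) =
  (2^-1 * Num.sqrt (- \det g)) *: eps_contract (G *m tensor_mx U *m G).
Proof.
have G_sym m n : G m n = G n m by rewrite -{1}tr_invmx_metric mxE.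
apply/matrixP => a b; rewrite !mxE /hodge2 /vol /ginv -mulrA; congr (_ * _).
move: (eps R) => ep; rewrite mulr_sumr; apply: eq_bigr => m _.
rewrite mulr_sumr; apply: eq_bigr => n _.
rewrite mxE !mulr_sumr exchange_big; apply: eq_bigr => n' _.
rewrite mxE !mulr_suml !mulr_sumr; apply: eq_bigr => m' _.
by rewrite !mxE (G_sym n' n); ring.
Qed.

Lemma hodge2_frame (U : tensor2 R) : (tensor_mx U)^T = - tensor_mx U ->
  E^T *m tensor_mx (hodge2 (ginv g) (vol g) U) *m E =
  orientation *: mhodge (E^T *m tensor_mx U *m E).
Proof.
move=> U_antisym.
have Y_antisym : (E^T *m tensor_mx U *m E)^T = - (E^T *m tensor_mx U *m E).
  by rewrite !trmx_mul trmxK U_antisym mulNmx mulmxN mulmxA.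
rewrite mhodge_eps // hodge2_eps_contract -scalemxAr -scalemxAl invmx_frame.
rewrite (_ : E *m eta *m E^T *m tensor_mx U *m (E *m eta *m E^T) =
  E *m (eta *m (E^T *m tensor_mx U *m E) *m eta) *m E^T); last by rewrite !mulmxA.
by rewrite eps_contract_congr !scalerA /orientation; congr (_ *: _); ring.
Qed.

Lemma frame_wedge (U : tensor2 R) (u v : 'I_4 -> R) :
  (forall a b, U a b = u a * v b - u b * v a) ->
  E^T *m tensor_mx U *m E =
  wedge_mx (fun i => \sum_a E a i * u a) (fun i => \sum_a E a i * v a).
Proof.
move=> U_wedge; apply/matrixP => i j.
by do 3 rewrite ?mxE ?sum_ord4; rewrite !U_wedge; ring.
Qed.
End Frame.

Lemma tr_hodge2 (R : rcfType) (g : 'M[R]_4) (U : tensor2 R) :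
  (tensor_mx (hodge2 (ginv g) (vol g) U))^T = - tensor_mx (hodge2 (ginv g) (vol g) U).
Proof.
apply/matrixP => a b; rewrite !mxE /hodge2 /vol -mulrN; congr (_ * _).
have eps_swap m n : eps R b a m n = - eps R a b m n by apply: eps_swap01.
move: eps_swap; move: (eps R) (Num.sqrt (- \det g)) => ep s eps_swap.
rewrite -sumrN; apply: eq_bigr => m _; rewrite -sumrN; apply: eq_bigr => n _.
rewrite -sumrN; apply: eq_bigr => m' _; rewrite -sumrN; apply: eq_bigr => n' _.
by rewrite eps_swap; ring.
Qed.

Lemma hodge2_scale (R : rcfType) (g : 'M[R]_4) (U U' : tensor2 R) (c : R) :
  tensor_mx U' = c *: tensor_mx U ->
  tensor_mx (hodge2 (ginv g) (vol g) U') = c *: tensor_mx (hodge2 (ginv g) (vol g) U).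
Proof.
move=> U'E; apply/matrixP => a b; rewrite !mxE /hodge2 mulrCA; congr (_ * _).
rewrite mulr_sumr; apply: eq_bigr => m _; rewrite mulr_sumr; apply: eq_bigr => n _.
rewrite mulr_sumr; apply: eq_bigr => m' _; rewrite mulr_sumr; apply: eq_bigr => n' _.
have := congr1 (fun M : 'M_4 => M m' n') U'E; rewrite !mxE => ->; ring.
Qed.

Lemma tr_tensor_mx_wedge (R : comPzRingType) (U : tensor2 R) (u v : 'I_4 -> R) :
  (forall a b, U a b = u a * v b - u b * v a) -> (tensor_mx U)^T = - tensor_mx U.
Proof. by move=> U_wedge; apply/matrixP => a b; rewrite !mxE !U_wedge; ring. Qed.

Section SimpleForm.
Variable R : rcfType.
Variables g E : 'M[R]_4.
Hypothesis frameE : E^T *m g *m E = minkowski R.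
Variables (U : tensor2 R) (u v : 'I_4 -> R).
Hypothesis U_wedge : forall a b, U a b = u a * v b - u b * v a.
Local Notation G := (invmx g).
Local Notation Um := (tensor_mx U).
Local Notation Sm := (tensor_mx (hodge2 (ginv g) (vol g) U)).

Let U_antisym : Um^T = - Um := tr_tensor_mx_wedge U_wedge.
Let frame_U := frame_wedge E U_wedge.
Let frame_S := hodge2_frame frameE U_antisym.

Lemma simple_hodge_orth : Um *m G *m Sm = 0.
Proof.
apply: (frame_inj frameE); rewrite (frame_mulmx frameE) frame_S frame_U.
by rewrite -scalemxAr wedge_hodge_orth scaler0 mulmx0 mul0mx.
Qed.

Lemma simple_sqr_sub_hodge_sqr :
  Um *m G *m Um - Sm *m G *m Sm = (2^-1 * \tr (G *m Um *m G *m Um)) *: g.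
Proof.
apply: (frame_inj frameE).
rewrite mulmxBr mulmxBl !(frame_mulmx frameE) frame_S -!scalemxAl -!scalemxAr scalerA.
by rewrite (orientation_sqr frameE) scale1r (mxtrace_frame frameE) -scalemxAl frameE frame_U
  wedge_sqr_sub_hodge_sqr.
Qed.

Section Sandwich.
Variable X : 'M[R]_4.
Hypothesis X_antisym : X^T = - X.
Let frame_X_antisym : (E^T *m X *m E)^T = - (E^T *m X *m E).
Proof. by rewrite !trmx_mul trmxK X_antisym mulNmx mulmxN mulmxA. Qed.

Lemma simple_sandwich :
  Um *m G *m X *m G *m Um = (2^-1 * \tr (G *m X *m G *m Um)) *: Um.
Proof.
apply: (frame_inj frameE).
rewrite !(frame_mulmx frameE) (mxtrace_frame frameE) -scalemxAr -scalemxAl.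
by rewrite frame_U (wedge_sandwich _ _ frame_X_antisym).
Qed.

Lemma simple_hodge_sandwich :
  Sm *m G *m X *m G *m Sm = (2^-1 * \tr (G *m X *m G *m Sm)) *: Sm.
Proof.
apply: (frame_inj frameE).
rewrite !(frame_mulmx frameE) (mxtrace_frame frameE) -scalemxAr -scalemxAl.
rewrite frame_S -!scalemxAr -!scalemxAl scalerA (orientation_sqr frameE) scale1r.
rewrite frame_U mxtraceZ scalerA (hodge_sandwich _ _ frame_X_antisym); congr (_ *: _).
move: (orientation_sqr frameE); set s := orientation g E; set t := \tr _ => s_sq.
by rewrite -mulrA (mulrC s t) -mulrA s_sq mulr1.
Qed.
End Sandwich.
End SimpleForm.

Lemma ip2_mxtrace (F : numFieldType) (G : 'M[F]_4) (U V : tensor2 F) :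
  G^T = G -> (tensor_mx V)^T = - tensor_mx V ->
  ip2 (fun a b => G a b) U V = - \tr (G *m tensor_mx U *m G *m tensor_mx V).
Proof.
move=> G_sym V_antisym; have GN a b : G b a = G a b by rewrite -[in LHS]G_sym mxE.
have V0 a : V a a = 0 by have := antisym_diag V_antisym a; rewrite mxE.
have VN a b : V b a = - V a b by have := antisym_entry V_antisym a b; rewrite !mxE.
rewrite /ip2 /mxtrace; do 6 rewrite ?mxE ?sum_ord4.
rewrite ?V0 ?(VN i0 i1) ?(VN i0 i2) ?(VN i0 i3) ?(VN i1 i2) ?(VN i1 i3) ?(VN i2 i3).
rewrite ?(GN i0 i1) ?(GN i0 i2) ?(GN i0 i3) ?(GN i1 i2) ?(GN i1 i3) ?(GN i2 i3).
ring.
Qed.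

Definition endo (R : comUnitRingType) (g : 'M[R]_4) (T : tensor2 R) : 'M[R]_4 :=
  invmx g *m tensor_mx T.

Section TimelikeUnit.
Variable R : rcfType.
Variables g E : 'M[R]_4.
Hypothesis frameE : E^T *m g *m E = minkowski R.
Variable U : tensor2 R.
Hypothesis U_unit : timelike_unit2 g U.
Local Notation G := (invmx g).
Local Notation S := (hodge2 (ginv g) (vol g) U).
Local Notation M := (endo g U).
Local Notation N := (endo g S).

Lemma tr_tensor_mx_timelike : (tensor_mx U)^T = - tensor_mx U.
Proof. by case: U_unit => -[u [v /tr_tensor_mx_wedge]]. Qed.

Lemma mxtrace_endo_sqr : \tr (M *m M) = 2.
Proof.
case: U_unit => _; rewrite ip2_mxtrace ?(tr_invmx_metric frameE) ?tr_tensor_mx_timelike //.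
by rewrite /endo !mulmxA => /eqP; rewrite eqr_opp => /eqP.
Qed.

Lemma endo_hodge_mul : M *m N = 0.
Proof.
case: U_unit => -[u [v U_wedge]] _.
have -> : M *m N = G *m (tensor_mx U *m G *m tensor_mx S) by rewrite /endo !mulmxA.
by rewrite (simple_hodge_orth frameE U_wedge) mulmx0.
Qed.

Lemma hodge_endo_mul : N *m M = 0.
Proof.
case: U_unit => -[u [v U_wedge]] _.
have := congr1 trmx (simple_hodge_orth frameE U_wedge).
rewrite !trmx_mul tr_hodge2 tr_tensor_mx_timelike (tr_invmx_metric frameE) trmx0.
rewrite mulNmx !mulmxN opprK mulmxA => SGU.
have -> : N *m M = G *m (tensor_mx S *m G *m tensor_mx U) by rewrite /endo !mulmxA.
by rewrite SGU mulmx0.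
Qed.

Lemma endo_sqr_sub_hodge_sqr : M *m M - N *m N = 1%:M.
Proof.
case: U_unit => -[u [v U_wedge]] _.
have := simple_sqr_sub_hodge_sqr frameE U_wedge.
rewrite -[G *m _ *m G *m _]mulmxA -/(endo g U) mxtrace_endo_sqr mulVf ?pnatr_eq0 // scale1r.
move/(congr1 (mulmx G)); rewrite mulmxBr mulVmx ?(metric_unit frameE) // => <-.
by rewrite /endo !mulmxA.
Qed.

Lemma mxtrace_hodge_sqr : \tr (N *m N) = - 2.
Proof.
have -> : N *m N = M *m M - 1%:M by rewrite -endo_sqr_sub_hodge_sqr opprB addrC subrK.
by rewrite linearB /= mxtrace1 mxtrace_endo_sqr; lra.
Qed.

Section Sandwich.
Variable X : 'M[R]_4.
Hypothesis X_antisym : X^T = - X.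

Lemma endo_sandwich : M *m (G *m X) *m M = (2^-1 * \tr (G *m X *m M)) *: M.
Proof.
case: U_unit => -[u [v U_wedge]] _.
have -> : M *m (G *m X) *m M = G *m (tensor_mx U *m G *m X *m G *m tensor_mx U).
  by rewrite /endo !mulmxA.
by rewrite (simple_sandwich frameE U_wedge X_antisym) -scalemxAr /endo !mulmxA.
Qed.

Lemma hodge_endo_sandwich : N *m (G *m X) *m N = (2^-1 * \tr (G *m X *m N)) *: N.
Proof.
case: U_unit => -[u [v U_wedge]] _.
have -> : N *m (G *m X) *m N = G *m (tensor_mx S *m G *m X *m G *m tensor_mx S).
  by rewrite /endo !mulmxA.
by rewrite (simple_hodge_sandwich frameE U_wedge X_antisym) -scalemxAr /endo !mulmxA.
Qed.
End Sandwich.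
End TimelikeUnit.

Section EndoPair.
Variables (R : realFieldType) (n : nat).
Variables M N : 'M[R]_n.
Hypotheses (MN0 : M *m N = 0) (NM0 : N *m M = 0) (sqr_sub : M *m M - N *m N = 1%:M).

Lemma endo_sqrE : M *m M = N *m N + 1%:M.
Proof. by rewrite -sqr_sub addrC subrK. Qed.

Lemma cube_endo : M *m M *m M = M.
Proof. by rewrite -mulmxA endo_sqrE mulmxDr mulmx1 mulmxA MN0 mul0mx add0r. Qed.

Lemma cube_hodge : N *m N *m N = - N.
Proof.
have : N *m (M *m M) = 0 by rewrite mulmxA NM0 mul0mx.
by rewrite endo_sqrE mulmxDr mulmx1 mulmxA => /eqP; rewrite addr_eq0 => /eqP.
Qed.

Lemma endo_commute_sqr_add : M *m (M *m M + N *m N) = (M *m M + N *m N) *m M.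
Proof. by rewrite mulmxDr mulmxDl !mulmxA MN0 -(mulmxA N N M) NM0 mul0mx mulmx0. Qed.

Lemma hodge_commute_sqr_add : N *m (M *m M + N *m N) = (M *m M + N *m N) *m N.
Proof. by rewrite mulmxDr mulmxDl !mulmxA NM0 -(mulmxA M M N) MN0 mul0mx mulmx0. Qed.

Lemma commute_sqr_decompose (M' : 'M[R]_n) (mu nu : R) :
  M' *m (M *m M) = M *m M *m M' ->
  M *m M' *m M = mu *: M -> N *m M' *m N = nu *: N ->
  M' = mu *: M - nu *: N.
Proof.
move=> M'_comm M_sand N_sand.
(* M^2 and -N^2 are complementary idempotents, both commuting with M'. *)
have M'_commN : M' *m (N *m N) = N *m N *m M'.
  have := M'_comm; rewrite endo_sqrE mulmxDr mulmxDl mulmx1 mul1mx.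
  by move/addIr.
have MM_M' : M *m M *m M' = mu *: M.
  have P_idem : M *m M *m (M *m M) = M *m M by rewrite mulmxA cube_endo.
  rewrite -{1}P_idem -mulmxA -M'_comm.
  have -> : M *m M *m (M' *m (M *m M)) = M *m (M *m M' *m M) *m M by rewrite !mulmxA.
  by rewrite M_sand -scalemxAr -scalemxAl cube_endo.
have NN_M' : N *m N *m M' = nu *: N.
  have Q_neg : N *m N *m (N *m N) = - (N *m N) by rewrite mulmxA cube_hodge mulNmx.
  have -> : N *m N *m M' = - (N *m N *m (N *m N) *m M') by rewrite Q_neg mulNmx opprK.
  rewrite -mulmxA -M'_commN.
  have -> : N *m N *m (M' *m (N *m N)) = N *m (N *m M' *m N) *m N by rewrite !mulmxA.
  by rewrite N_sand -scalemxAr -scalemxAl cube_hodge scalerN opprK.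
by rewrite -[M']mul1mx -sqr_sub mulmxBl MM_M' NN_M'.
Qed.

Lemma decompose_cube_coef_eq0 (M' : 'M[R]_n) (mu nu : R) :
  M' = mu *: M - nu *: N -> M' *m M' *m M' = M' -> \tr (N *m N) != 0 -> nu = 0.
Proof.
move=> M'E M'_cube trNN.
(* Evaluating M'^3 = M' on N gives (nu^3 + nu) N^2 = 0. *)
have M'N : M' *m N = - nu *: (N *m N).
  by rewrite M'E mulmxBl -!scalemxAl MN0 scaler0 sub0r scaleNr.
have M'NN : M' *m (N *m N) = nu *: N.
  by rewrite mulmxA M'N -scalemxAl cube_hodge scalerN scaleNr opprK.
have : (nu ^+ 3 + nu) *: (N *m N) = 0.
  have := congr1 (mulmx^~ N) M'_cube.
  rewrite -!mulmxA M'N -!scalemxAr M'NN -scalemxAr M'N !scalerA => /eqP.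
  by rewrite -subr_eq0 -scalerBl => /eqP <-; congr (_ *: _); ring.
move/(congr1 mxtrace); rewrite mxtraceZ linear0 => /eqP.
rewrite mulf_eq0 (negPf trNN) orbF (_ : nu ^+ 3 + nu = nu * (nu ^+ 2 + 1)); last by ring.
rewrite mulf_eq0 => /orP[/eqP // | ]; rewrite paddr_eq0 ?sqr_ge0 ?ler01 //.
by rewrite oner_eq0 andbF.
Qed.
End EndoPair.

Lemma proportional_of_commute_sqr (R : realFieldType) (n : nat) (M N M' N' : 'M[R]_n)
    (mu nu : R) :
  M *m N = 0 -> N *m M = 0 -> M *m M - N *m N = 1%:M ->
  M' *m N' = 0 -> M' *m M' - N' *m N' = 1%:M ->
  M' *m (M *m M) = M *m M *m M' ->
  M *m M' *m M = mu *: M -> N *m M' *m N = nu *: N ->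
  \tr (N *m N) != 0 -> M' = mu *: M.
Proof.
move=> MN0 NM0 sqr_sub M'N'0 sqr_sub' M'_comm M_sand N_sand trNN.
have M'E := commute_sqr_decompose MN0 NM0 sqr_sub M'_comm M_sand N_sand.
have nu0 := decompose_cube_coef_eq0 MN0 NM0 sqr_sub M'E (cube_endo M'N'0 sqr_sub') trNN.
by rewrite M'E nu0 scale0r subr0.
Qed.

Section Ricci.
Variable R : rcfType.
Variables g E : 'M[R]_4.
Hypothesis frameE : E^T *m g *m E = minkowski R.
Local Notation hodge := (hodge2 (ginv g) (vol g)).

Lemma tensor_mx_fsq (T : tensor2 R) :
  tensor_mx (fsq (ginv g) T) = tensor_mx T *m invmx g *m tensor_mx T.
Proof.
apply/matrixP => a b; rewrite !mxE /fsq exchange_big; apply: eq_bigr => n _.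
by rewrite mxE mulr_suml; apply: eq_bigr => m _; rewrite !mxE.
Qed.

Variables (Ric : tensor2 R) (kappa : R) (U : tensor2 R).
Hypothesis em : em_data g Ric kappa U.

Lemma endo_ricci :
  endo g Ric = - kappa *: (endo g U *m endo g U + endo g (hodge U) *m endo g (hodge U)).
Proof.
rewrite /endo; case: em => _ [_ RicE].
have -> : tensor_mx Ric =
    - kappa *: (tensor_mx (fsq (ginv g) U) + tensor_mx (fsq (ginv g) (hodge U))).
  by apply/matrixP => a b; rewrite !mxE RicE; ring.
by rewrite /endo -scalemxAr !tensor_mx_fsq mulmxDr !mulmxA.
Qed.

Lemma endo_ricci_commute : endo g U *m endo g Ric = endo g Ric *m endo g U.
Proof.
have U_unit : timelike_unit2 g U by case: em => _ [].
rewrite endo_ricci -scalemxAr -scalemxAl.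
by rewrite endo_commute_sqr_add ?(endo_hodge_mul frameE) ?(hodge_endo_mul frameE).
Qed.

Lemma endo_ricci_commute_hodge :
  endo g (hodge U) *m endo g Ric = endo g Ric *m endo g (hodge U).
Proof.
have U_unit : timelike_unit2 g U by case: em => _ [].
rewrite endo_ricci -scalemxAr -scalemxAl.
by rewrite hodge_commute_sqr_add ?(endo_hodge_mul frameE) ?(hodge_endo_mul frameE).
Qed.

Lemma endo_ricci_commute_proportional (U' : tensor2 R) : timelike_unit2 g U' ->
  endo g U' *m endo g Ric = endo g Ric *m endo g U' ->
  exists2 mu, mu != 0 & tensor_mx U' = mu *: tensor_mx U.
Proof.
move=> U'_unit U'_comm.
have [kappa_gt0 [U_unit _]] := em.
have U'_antisym := tr_tensor_mx_timelike U'_unit.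
set M := endo g U; set N := endo g (hodge U); set M' := endo g U'.
have NN : N *m N = M *m M - 1%:M.
  by rewrite -(endo_sqr_sub_hodge_sqr frameE U_unit) opprB addrC subrK.
(* g^-1 Ric = -kappa (2 M^2 - 1), so commuting with Ric is commuting with M^2. *)
have M'_comm : M' *m (M *m M) = M *m M *m M'.
  have : M' *m (M *m M + N *m N) = (M *m M + N *m N) *m M'.
    move: U'_comm; rewrite endo_ricci -/M -/N -/M' -scalemxAr -scalemxAl.
    by apply: scalerI; rewrite oppr_eq0 gt_eqF.
  rewrite NN mulmxDr mulmxBr mulmx1 mulmxDl mulmxBl mul1mx !addrA.
  move/(congr1 (fun X => X + M')); rewrite !subrK -!mulr2n -!scaler_nat.
  by apply: scalerI; rewrite pnatr_eq0.
have := proportional_of_commute_sqr (endo_hodge_mul frameE U_unit)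
  (hodge_endo_mul frameE U_unit) (endo_sqr_sub_hodge_sqr frameE U_unit)
  (endo_hodge_mul frameE U'_unit) (endo_sqr_sub_hodge_sqr frameE U'_unit) M'_comm
  (endo_sandwich frameE U_unit U'_antisym) (hodge_endo_sandwich frameE U_unit U'_antisym).
rewrite (mxtrace_hodge_sqr frameE U_unit) oppr_eq0 pnatr_eq0 => /(_ isT).
set mu := 2^-1 * _ => M'E.
have U'E : tensor_mx U' = mu *: tensor_mx U.
  by move: (congr1 (mulmx g) M'E); rewrite /M' /M /endo -scalemxAr !mulKVmx ?(metric_unit frameE).
exists mu => //; apply/eqP => mu0; have := mxtrace_endo_sqr frameE U'_unit.
by rewrite /endo U'E mu0 scale0r mulmx0 mul0mx mxtrace0 => /eqP; rewrite eq_sym pnatr_eq0.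
Qed.
End Ricci.

Definition wedge_eq0 (F : pzRingType) (w : 'I_4 -> F) (U : tensor2 F) : Prop :=
  forall a b c, w a * U b c + w b * U c a + w c * U a b = 0.

Section WedgeDivisibility.
Variable F : fieldType.
Variables (U U' : tensor2 F) (u v u' v' : 'I_4 -> F).
Hypotheses (U_wedge : forall a b, U a b = u a * v b - u b * v a)
           (U'_wedge : forall a b, U' a b = u' a * v' b - u' b * v' a).

Lemma wedge_eq0_factors : wedge_eq0 u' U' /\ wedge_eq0 v' U'.
Proof. by split=> a b c; rewrite !U'_wedge; ring. Qed.

Lemma wedge_eq0_proportional p q : wedge_eq0 u' U -> wedge_eq0 v' U -> U p q != 0 ->
  forall a b, U' a b = ((u' p * v' q - u' q * v' p) / U p q) * U a b.
Proof.
move=> u'U v'U Upq a b.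
have solve (w : 'I_4 -> F) : wedge_eq0 w U -> forall x, w x = - (w p * U q x + w q * U x p) / U p q.
  move=> wU x; apply: (mulIf Upq); rewrite divfK //; apply/eqP.
  by rewrite -subr_eq0 -(wU x p q); apply/eqP; ring.
rewrite U'_wedge (solve _ u'U a) (solve _ u'U b) (solve _ v'U a) (solve _ v'U b).
by move: Upq; rewrite !U_wedge => Upq; field.
Qed.
End WedgeDivisibility.

Lemma wedge_eq0_scale (F : fieldType) (w : 'I_4 -> F) (U U' : tensor2 F) (mu : F) :
  mu != 0 -> (forall a b, U' a b = mu * U a b) -> wedge_eq0 w U <-> wedge_eq0 w U'.
Proof.
move=> mu0 U'E; split=> wU a b c; have := wU a b c; rewrite !U'E => wUabc.
  by rewrite -(mulr0 mu) -wUabc; ring.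
by apply: (mulfI mu0); rewrite mulr0 -wUabc; ring.
Qed.

Section Planes.
Variable R : rcfType.
Variable g : 'M[R]_4.
Hypothesis g_unit : g \in unitmx.

Lemma lower_raise (w : 'I_4 -> R) a :
  \sum_m g a m * (\sum_n invmx g m n * w n) = w a.
Proof.
under eq_bigr => m _ do rewrite mulr_sumr.
rewrite exchange_big /=; transitivity (\sum_n (g *m invmx g) a n * w n).
  by apply: eq_bigr => n _; rewrite mxE mulr_suml; apply: eq_bigr => m _; rewrite mulrA.
rewrite mulmxV //; under eq_bigr => n _ do rewrite mxE eq_sym.
exact: sum_delta_ord4.
Qed.

Lemma plane_of_sub_wedge_eq0 (U U' : tensor2 R) (w : 'I_4 -> R) :
  (forall x, plane_of g U' x -> plane_of g U x) -> wedge_eq0 w U' -> wedge_eq0 w U.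
Proof.
move=> sub_UU' wU' a b c; pose x m := \sum_n invmx g m n * w n.
have x_plane : plane_of g U' x by move=> a' b' c' /=; rewrite !lower_raise; exact: wU'.
by have := sub_UU' x x_plane a b c; rewrite /= !lower_raise.
Qed.

Lemma plane_of_sub_proportional (U U' : tensor2 R) p q :
  simple2 U -> simple2 U' -> U p q != 0 ->
  (forall x, plane_of g U' x -> plane_of g U x) ->
  exists c, forall a b, U' a b = c * U a b.
Proof.
move=> [u [v U_wedge]] [u' [v' U'_wedge]] Upq sub_UU'.
have [u'U' v'U'] := wedge_eq0_factors U'_wedge.
eexists; apply: (wedge_eq0_proportional U_wedge U'_wedge _ _ Upq).
  exact: plane_of_sub_wedge_eq0 sub_UU' u'U'.
exact: plane_of_sub_wedge_eq0 sub_UU' v'U'.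
Qed.

Lemma plane_of_scale (U U' : tensor2 R) (mu : R) : mu != 0 ->
  (forall a b, U' a b = mu * U a b) -> forall x, plane_of g U x <-> plane_of g U' x.
Proof. by move=> mu0 U'E x; exact: (wedge_eq0_scale _ mu0 U'E). Qed.
End Planes.

Section RicciWeyl.
Variable R : rcfType.
Local Notation C := R[i].
Local Open Scope complex_scope.
Variable g : 'M[R]_4.
Local Notation hodge := (hodge2 (ginv g) (vol g)).

Definition comm2 (A B : tensor2 R) : 'M[R]_4 :=
  tensor_mx A *m invmx g *m tensor_mx B - tensor_mx B *m invmx g *m tensor_mx A.

Lemma comm2_eq0P (A B : tensor2 R) : g \in unitmx ->
  comm2 A B = 0 <-> endo g A *m endo g B = endo g B *m endo g A.
Proof.
move=> g_unit; have -> : comm2 A B = g *m (endo g A *m endo g B - endo g B *m endo g A).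
  by rewrite /comm2 /endo mulmxBr !mulmxA mulmxV // !mul1mx.
split=> [/(congr1 (mulmx (invmx g)))|->]; last by rewrite subrr mulmx0.
by rewrite mulKmx // mulmx0 => /eqP; rewrite subr_eq0 => /eqP.
Qed.

Lemma comm2_entry (A B : tensor2 R) n l : (invmx g)^T = invmx g ->
  (tensor_mx A)^T = - tensor_mx A -> sym2 B ->
  (tensor_mx A *m invmx g *m tensor_mx B) n l + (tensor_mx A *m invmx g *m tensor_mx B) l n =
  comm2 A B n l.
Proof.
move=> G_sym A_antisym B_sym.
have B_tr : (tensor_mx B)^T = tensor_mx B by apply/matrixP => a b; rewrite !mxE B_sym.
have /(congr1 (fun M : 'M_4 => M n l)) : (tensor_mx A *m invmx g *m tensor_mx B)^T =
    - (tensor_mx B *m invmx g *m tensor_mx A).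
  by rewrite !trmx_mul B_tr G_sym A_antisym !mulmxN mulmxA.
rewrite [(_^T) n l]mxE [(- _ : 'M_4) n l]mxE => ->.
by rewrite /comm2 [(_ - _ : 'M_4) n l]mxE [(- _ : 'M_4) n l]mxE.
Qed.

Definition selfdual2 (U : tensor2 R) : tensor2 C := fun m n =>
  ((Num.sqrt 2)%:C)^-1 * ((U m n)%:C - 'i * (hodge U m n)%:C).

(* With rho = -b/a the calG terms of calP cancel. *)
Lemma calP_typeD (W : tensor4 R) (U' : tensor2 R) : typeD_data g W U' -> forall p q c d,
  calP g W p q c d =
  3%:R * (- inv_b g W / inv_a g W) * selfdual2 U' p q * selfdual2 U' c d.
Proof. by case=> _ [_ W_typeD] p q c d; rewrite /calP W_typeD /otimes2 /selfdual2; ring. Qed.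

Lemma real_complexD (x y : R) : (x + y)%:C = x%:C + y%:C.
Proof. exact: rmorphD. Qed.

Lemma real_complex_mulmx_entry (A B : tensor2 R) n l :
  ((tensor_mx A *m invmx g *m tensor_mx B) n l)%:C =
  \sum_k \sum_m (A n m)%:C * (invmx g m k)%:C * (B k l)%:C.
Proof.
rewrite mxE rmorph_sum; apply: eq_bigr => k _.
rewrite mxE mulr_suml rmorph_sum; apply: eq_bigr => m _.
by rewrite !mxE !rmorphM.
Qed.

Lemma RP_sym_typeD (Ric : tensor2 R) (W : tensor4 R) (U' : tensor2 R) :
  (invmx g)^T = invmx g -> sym2 Ric -> typeD_data g W U' -> forall l n c d,
  RP_sym g Ric W l n c d =
  2^-1 * (3%:R * (- inv_b g W / inv_a g W)) * selfdual2 U' c d * ((Num.sqrt 2)%:C)^-1 *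
  ((comm2 U' Ric n l)%:C - 'i * (comm2 (hodge U') Ric n l)%:C).
Proof.
move=> G_sym Ric_sym W_typeD l n c d; have P_typeD := calP_typeD W_typeD.
have U'_unit : timelike_unit2 g U' by case: W_typeD => _ [].
have U'_antisym := tr_tensor_mx_timelike U'_unit.
rewrite -!comm2_entry ?tr_hodge2 //.
rewrite /RP_sym !real_complexD !real_complex_mulmx_entry; move: P_typeD.
rewrite /selfdual2 /ginvC /ginv; move: (hodge U') => S' P_typeD.
by rewrite !sum_ord4 !P_typeD; ring.
Qed.
End RicciWeyl.

Section TypeD.
Variable R : rcfType.
Local Notation C := R[i].
Local Open Scope complex_scope.
Variable g : 'M[R]_4.
Local Notation hodge := (hodge2 (ginv g) (vol g)).

Lemma real_sub_i_eq0 (x y : R) : x%:C - 'i * y%:C = 0 -> x = 0 /\ y = 0.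
Proof. by simpc; case=> -> /eqP; rewrite oppr_eq0 => /eqP ->. Qed.

Lemma timelike_unit2_neq0 (U : tensor2 R) : timelike_unit2 g U -> exists p q, U p q != 0.
Proof.
case=> _ ipU; case: (boolP [exists p, exists q, U p q != 0]).
  by case/existsP => p /existsP[q Upq]; exists p, q.
rewrite negb_exists => /forallP U0; move: ipU; rewrite /ip2 big1 => [/eqP|a _].
  by rewrite eq_sym oppr_eq0 pnatr_eq0.
rewrite big1 // => b _; have /eqP Uab : U a b == 0.
  by have := U0 a; rewrite negb_exists => /forallP/(_ b); rewrite negbK.
by rewrite big1 // => a' _; rewrite big1 // => b' _; rewrite Uab !mul0r.
Qed.

Lemma inv_a_eq0 (W : tensor4 R) :
  (forall p q r s, selfdual g W p q r s = 0) -> inv_a g W = 0.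
Proof.
move=> W0; rewrite /inv_a /dtr big1 ?mulr0 // => a _; rewrite big1 // => b _.
rewrite big1 // => a' _; rewrite big1 // => b' _; rewrite /dcomp big1 ?mulr0 // => m _.
by rewrite big1 // => n _; rewrite big1 // => m' _; rewrite big1 // => n' _; rewrite W0 !mul0r.
Qed.

Lemma typeD_rho_neq0 (W : tensor4 R) (U' : tensor2 R) :
  typeD_data g W U' -> - inv_b g W / inv_a g W != 0.
Proof.
case=> a_neq0 [_ W_typeD]; apply: contra_neq a_neq0 => rho0.
by apply: inv_a_eq0 => p q r s; rewrite W_typeD rho0; ring.
Qed.

Lemma sqrt2_complex_neq0 : (Num.sqrt 2)%:C != 0 :> C.
Proof. by apply/eqP => /complexI/eqP; rewrite sqrtr_eq0 lern0. Qed.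

Lemma selfdual2_neq0 (U : tensor2 R) c d : U c d != 0 -> selfdual2 g U c d != 0.
Proof.
move=> Ucd; rewrite mulf_neq0 ?invr_eq0 ?sqrt2_complex_neq0 //.
by apply/eqP => /real_sub_i_eq0[U0 _]; rewrite U0 eqxx in Ucd.
Qed.

Lemma RP_sym_eq0P (Ric : tensor2 R) (W : tensor4 R) (U' : tensor2 R) :
  (invmx g)^T = invmx g -> sym2 Ric -> typeD_data g W U' ->
  (forall l n c d, RP_sym g Ric W l n c d = 0) <->
  comm2 g U' Ric = 0 /\ comm2 g (hodge U') Ric = 0.
Proof.
move=> G_sym Ric_sym W_typeD.
have U'_unit : timelike_unit2 g U' by case: W_typeD => _ [].
have RPE := RP_sym_typeD G_sym Ric_sym W_typeD.
split=> [RP0 | [U'0 S'0] l n c d]; last by rewrite RPE U'0 S'0 !mxE mulr0 subrr mulr0.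
have [c [d U'cd]] := timelike_unit2_neq0 U'_unit.
have K_neq0 : 2^-1 * (3%:R * (- inv_b g W / inv_a g W)) * selfdual2 g U' c d *
    ((Num.sqrt 2)%:C)^-1 != 0.
  apply: mulf_neq0; last by rewrite invr_eq0 sqrt2_complex_neq0.
  apply: mulf_neq0; last exact: selfdual2_neq0.
  apply: mulf_neq0; first by rewrite invr_eq0 pnatr_eq0.
  by apply: mulf_neq0; [rewrite pnatr_eq0 | exact: typeD_rho_neq0 W_typeD].
have comm0 n l : comm2 g U' Ric n l = 0 /\ comm2 g (hodge U') Ric n l = 0.
  by apply: real_sub_i_eq0; apply: (mulfI K_neq0); rewrite mulr0 -RPE RP0.
by split; apply/matrixP => n l; rewrite [RHS]mxE; [exact: (comm0 n l).1 | exact: (comm0 n l).2].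
Qed.
End TypeD.

Section Alignment.
Variable R : rcfType.
Variables g E : 'M[R]_4.
Hypothesis frameE : E^T *m g *m E = minkowski R.
Variables (Ric : tensor2 R) (kappa : R) (U U' : tensor2 R).
Hypotheses (em : em_data g Ric kappa U) (U'_unit : timelike_unit2 g U').
Local Notation hodge := (hodge2 (ginv g) (vol g)).

Lemma aligned_comm2_eq0 : (forall x, plane_of g U x <-> plane_of g U' x) ->
  comm2 g U' Ric = 0 /\ comm2 g (hodge U') Ric = 0.
Proof.
move=> same_plane; have U_unit : timelike_unit2 g U by case: em => _ [].
have [p [q Upq]] := timelike_unit2_neq0 U_unit.
have [c U'E] := plane_of_sub_proportional (metric_unit frameE) U_unit.1 U'_unit.1 Upq
  (fun x => (same_plane x).2).
have U'm : tensor_mx U' = c *: tensor_mx U by apply/matrixP => a b; rewrite !mxE U'E.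
have S'm := hodge2_scale g U'm.
rewrite !comm2_eq0P ?(metric_unit frameE) // /endo U'm S'm -!scalemxAr.
by rewrite -!scalemxAl -/(endo g U) -/(endo g (hodge U)) -/(endo g Ric)
  (endo_ricci_commute frameE em) (endo_ricci_commute_hodge frameE em).
Qed.

Lemma comm2_eq0_aligned : comm2 g U' Ric = 0 -> forall x, plane_of g U x <-> plane_of g U' x.
Proof.
move=> /(comm2_eq0P _ _ (metric_unit frameE)) U'_comm.
have [mu mu_neq0 U'E] := endo_ricci_commute_proportional frameE em U'_unit U'_comm.
apply: (plane_of_scale _ mu_neq0) => a b.
by have := congr1 (fun M : 'M_4 => M a b) U'E; rewrite !mxE.
Qed.
End Alignment.

Theorem lemma4 (R : rcfType) (g : 'M[R]_4) (Ric : tensor2 R) (W : tensor4 R) :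
  lorentzian g -> sym2 Ric -> weyl_alg g W ->
  nonnull_em g Ric -> typeD g W ->
  (aligned g Ric W <->
   (inv_a g W != 0 /\ forall l n c d, RP_sym g Ric W l n c d = 0)).
Proof.
move=> [_ [E frameE]] Ric_sym _ [kappa [U em]] [U' W_typeD].
have G_sym := tr_invmx_metric frameE.
split=> [[kappa1 [U1 [U1' [em1 [W_typeD1 [same_plane _]]]]]] | [_ RP0]].
  split; first by case: W_typeD1.
  have U1'_unit : timelike_unit2 g U1' by case: W_typeD1 => _ [].
  exact/(RP_sym_eq0P G_sym Ric_sym W_typeD1)/(aligned_comm2_eq0 frameE em1 U1'_unit).
have U'_unit : timelike_unit2 g U' by case: W_typeD => _ [].
have [comm0 _] := (RP_sym_eq0P G_sym Ric_sym W_typeD).1 RP0.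
have same_plane := comm2_eq0_aligned frameE em U'_unit comm0.
exists kappa, U, U'; do 3 split => //.
by move=> x; split=> orth_x y /same_plane; apply: orth_x.
Qed.
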